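(* Let $n\ge1$, $N=\{1,\dots,n\}$, $A=(a_{ij})\in[0,1]^{n\times n}$, $b=(b_1,\dots,b_n)$ with $b_i>0$, and assume $\check\alpha_j\le 1$ for all $j\in N$. Let $\lambda\in[0,+\infty)$ and $x=(x_1,\dots,x_n)\in[0,1]^n$. Then $x\in V^*(A,\lambda)$ if and only if there exists $p=(p_1,\dots,p_n)\in P$ such that $$\begin{cases} x_j=d_{0j}=1 & \text{for all } j\in N^*,\\ d_{(p_j-1)j}\le x_j\le d_{p_jj} & \text{for all } j\in N\setminus N^*,\\ \sum_{j\in N^*}a_{ij}+\sum_{j\in N\setminus N^*}\big[\gamma_{ij}\,x_j+(1-\gamma_{ij})\,a_{ij}\big]\ge b_i & \text{for all } i\in N,\\ \sum_{j\in N^*}a_{ij}+\sum_{j\in N\setminus N^*}\big[\gamma_{ij}\,x_j+(1-\gamma_{ij})\,a_{ij}\big]=\lambda x_i & \text{for all } i\in N,\end{cases}$$ where $\gamma_{ij}$ (depending on $p$) is as defined in the context.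
   Context: $\theta=(0,\dots,0)$. For $x\in[0,1]^n$, write $(A\odot x^T)_i=\sum_{j\in N}\min\{a_{ij},x_j\}$ (ordinary addition). $V^*(A,\lambda)=\{x\in[0,1]^n: (A\odot x^T)_i\ge b_i \text{ and } (A\odot x^T)_i=\lambda x_i \text{ for all } i\in N,\ x\neq\theta\}$ (constrained eigenvectors). Let $\check\alpha_j=\max\big(\{0\}\cup\{b_i-\sum_{k\in N\setminus\{j\}}a_{ik}: i\in N\}\big)$. For $j\in N$, let $D_j=\{d_{0j}<d_{1j}<\dots<d_{l_jj}\}$ be the set $\{\check\alpha_j\}\cup\{a_{ij}: i\in N,\ a_{ij}\ge\check\alpha_j\}\cup\{1\}$ listed increasingly, so $d_{0j}=\check\alpha_j$, $d_{l_jj}=1$, each $d_{pj}$ with $0<p<l_j$ is some $a_{ij}$, and every $a_{ij}\ge\check\alpha_j$ equals some $d_{pj}$. Let $N^*=\{j\in N:\check\alpha_j=1\}$; let $P_j=\{0\}$ if $j\in N^*$ and $P_j=\{p: d_{pj}\in D_j,\ d_{pj}>\check\alpha_j\}=\{1,\dots,l_j\}$ if $j\in N\setminus N^*$; $P=P_1\times\dots\times P_n$. For $p\in P$, $i\in N$, $j\in N\setminus N^*$: $\gamma_{ij}=1$ if $d_{p_jj}\le a_{ij}$ and $\gamma_{ij}=0$ if $a_{ij}\le d_{(p_j-1)j}$. *)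

From HB Require Import structures.
From mathcomp Require Import all_boot all_order all_algebra.
Set Implicit Arguments. Unset Strict Implicit. Unset Printing Implicit Defensive.
Import Order.TTheory GRing.Theory Num.Theory.
Local Open Scope ring_scope.

Section MaxMin.
Variables (R : realFieldType) (n : nat).
Implicit Types (A : 'M[R]_n) (b x : 'I_n -> R) (j : 'I_n).

Definition maxmin A x (i : 'I_n) : R := \sum_(j < n) Num.min (A i j) (x j).

Definition Vstar A b (lam : R) (x : 'I_n -> R) : Prop :=
  (forall j, 0 <= x j <= 1) /\
  (forall i, b i <= maxmin A x i) /\
  (forall i, maxmin A x i = lam * x i) /\
  (exists j, x j != 0).

Definition alpha_chk A b j : R :=
  \big[Num.max/0]_(i < n) (b i - \sum_(k < n | k != j) A i k).

Definition Dseq A b j : seq R :=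
  sort <=%R (undup (alpha_chk A b j ::
     rcons [seq A i j | i <- enum 'I_n & alpha_chk A b j <= A i j] 1)).

Definition d A b j (p : nat) : R := nth 0 (Dseq A b j) p.

Definition l_ A b j : nat := (size (Dseq A b j)).-1.

Definition Nstar A b j : bool := alpha_chk A b j == 1.

Definition inP A b (p : 'I_n -> nat) : Prop :=
  forall j, if Nstar A b j then p j = 0%N else (1 <= p j <= l_ A b j)%N.

(* gamma_ij = 1 if d_{p_j j} <= a_ij, 0 if a_ij <= d_{(p_j-1) j}
   (these cases are exhaustive and exclusive) *)
Definition gamma A b (p : 'I_n -> nat) (i j : 'I_n) : R :=
  if d A b j (p j) <= A i j then 1 else 0.

Definition lin_form A b p x (i : 'I_n) : R :=
  \sum_(j < n | Nstar A b j) A i j +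
  \sum_(j < n | ~~ Nstar A b j) (gamma A b p i j * x j + (1 - gamma A b p i j) * A i j).

End MaxMin.

From HB Require Import structures.
From mathcomp Require Import all_boot all_order all_algebra.
Import Order.TTheory GRing.Theory Num.Theory.
Set Implicit Arguments. Unset Strict Implicit. Unset Printing Implicit Defensive.

(** A solution must satisfy [x_j >= check-alpha_j] (otherwise some row
    [i] cannot reach [b_i] even with all other entries saturated), so
    [x_j] lies in one of the intervals [[d_(p-1)j, d_pj]] cut out by the
    breakpoints [D_j].  No entry [a_ij] lies strictly inside such an
    interval, hence on it [min(a_ij, x_j)] is the fixed affine expression
    [x_j] (if [d_pj <= a_ij]) or [a_ij] (otherwise): choosing [p_j] as the
    interval containing [x_j] turns the max-min system into the linear one,
    and conversely.  For [j] in [N^*] the only possible value is [x_j = 1],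
    and [x <> 0] is automatic since [b > 0]. *)

Section SortedBracket.
Local Open Scope order_scope.
Variables (disp : Order.disp_t) (T : orderType disp) (x0 : T) (s : seq T).
Hypothesis s_sorted : sorted <=%O s.

Definition bracket_index (y : T) : nat := maxn 1 (find (>= y) s).

Lemma nth_le_sorted i k : (i <= k < size s)%N -> nth x0 s i <= nth x0 s k.
Proof.
case/andP=> le_ik lt_ks; apply: le_sorted_leq_nth => //.
exact: leq_ltn_trans lt_ks.
Qed.

Lemma bracket_index_bounds y : (1 < size s)%N ->
  nth x0 s 0 <= y <= nth x0 s (size s).-1 ->
  (0 < bracket_index y < size s)%N &&
  (nth x0 s (bracket_index y).-1 <= y <= nth x0 s (bracket_index y)).
Proof.
move=> s_gt1 /andP[s0_le_y y_le_last].
have s_gt0 : (0 < size s)%N by apply: ltnW.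
have has_y : has (>= y) s.
  by apply/hasP; exists (nth x0 s (size s).-1); rewrite ?mem_nth ?prednK.
have ltks : (find (>= y) s < size s)%N by rewrite -has_find.
have y_le_k : y <= nth x0 s (find (>= y) s) := nth_find x0 has_y.
rewrite /bracket_index; case: (posnP (find (>= y) s)) => [k0 | k_gt0].
  have y_le_0 : y <= nth x0 s 0 by rewrite -k0.
  by rewrite k0 /= s_gt1 s0_le_y (le_trans y_le_0) // nth_le_sorted.
rewrite (maxn_idPr k_gt0) k_gt0 ltks y_le_k andbT /=.
have := before_find x0 (_ : (find (>= y) s).-1 < find (>= y) s)%N.
rewrite prednK // andbT => /(_ (leqnn _)) /negbT.
by rewrite -ltNge => /ltW.
Qed.

Lemma min_bracket a y p : (0 < p < size s)%N ->
  nth x0 s p.-1 <= y <= nth x0 s p -> (a \in s) || (a <= nth x0 s 0) ->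
  Order.min a y = if nth x0 s p <= a then y else a.
Proof.
case/andP=> p_gt0 lt_ps /andP[lo_y y_hi] a_in.
case: ifP => [hi_a | /negbT]; first exact/min_r/(le_trans y_hi).
rewrite -ltNge => a_lt_hi; apply/min_l/(le_trans _ lo_y).
have le_prev k : (k <= p.-1)%N -> nth x0 s k <= nth x0 s p.-1.
  by move=> le_kp; rewrite nth_le_sorted // le_kp (leq_ltn_trans (leq_pred p)).
case/orP: a_in => [a_in | a_le0]; last exact: le_trans a_le0 (le_prev 0%N _).
rewrite -(nth_index x0 a_in) le_prev // -ltnS prednK //.
rewrite ltnNge; apply: contraTN a_lt_hi => le_pi.
by rewrite -leNgt -[X in _ <= X](nth_index x0 a_in) nth_le_sorted // le_pi index_mem.
Qed.

End SortedBracket.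

Local Open Scope ring_scope.

Section Breakpoints.
Variables (R : realFieldType) (n : nat) (A : 'M[R]_n) (b : 'I_n -> R) (j : 'I_n).
Hypothesis A01 : forall i, 0 <= A i j <= 1.
Hypothesis alpha_le1 : alpha_chk A b j <= 1.

Lemma Dseq_sorted : sorted <=%R (Dseq A b j).
Proof. exact/sort_sorted/le_total. Qed.

Lemma mem_Dseq y : (y \in Dseq A b j) =
  [|| y == alpha_chk A b j, y == 1
    | y \in [seq A i j | i <- enum 'I_n & alpha_chk A b j <= A i j]].
Proof. by rewrite /Dseq mem_sort mem_undup in_cons mem_rcons in_cons. Qed.

Lemma Dseq_bounds y : y \in Dseq A b j -> alpha_chk A b j <= y <= 1.
Proof.
rewrite mem_Dseq => /or3P[/eqP-> | /eqP-> | /mapP[i]]; rewrite ?lexx ?alpha_le1 //.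
by rewrite mem_filter => /andP[alpha_le _] ->; rewrite alpha_le; case/andP: (A01 i).
Qed.

Lemma alpha_in_Dseq : alpha_chk A b j \in Dseq A b j.
Proof. by rewrite mem_Dseq eqxx. Qed.

Lemma one_in_Dseq : 1 \in Dseq A b j.
Proof. by rewrite mem_Dseq eqxx orbT. Qed.

Lemma size_Dseq : size (Dseq A b j) = (l_ A b j).+1.
Proof. by rewrite /l_ prednK //; case: (Dseq A b j) alpha_in_Dseq. Qed.

Lemma d_first : d A b j 0 = alpha_chk A b j.
Proof.
apply/eqP; rewrite eq_le; apply/andP; split.
  rewrite -[leRHS](nth_index 0 alpha_in_Dseq) nth_le_sorted ?Dseq_sorted //.
  by rewrite index_mem alpha_in_Dseq.
have s_gt0 : (0 < size (Dseq A b j))%N by rewrite size_Dseq.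
by case/andP: (Dseq_bounds (mem_nth 0 s_gt0)).
Qed.

Lemma d_last : d A b j (l_ A b j) = 1.
Proof.
have lt_l : (l_ A b j < size (Dseq A b j))%N by rewrite size_Dseq.
apply/eqP; rewrite eq_le; apply/andP; split.
  by case/andP: (Dseq_bounds (mem_nth 0 lt_l)).
rewrite -[leLHS](nth_index 0 one_in_Dseq) nth_le_sorted ?Dseq_sorted // lt_l.
by rewrite -ltnS -size_Dseq index_mem one_in_Dseq.
Qed.

Lemma l_gt0 : ~~ Nstar A b j -> (0 < l_ A b j)%N.
Proof. by apply: contraNT; rewrite -eqn0Ngt /Nstar -d_first -d_last => /eqP->. Qed.

Lemma entry_in_Dseq_or_below i : (A i j \in Dseq A b j) || (A i j <= d A b j 0).
Proof.
rewrite d_first; case: (leP (alpha_chk A b j) (A i j)) => [alpha_le | /ltW ->].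
  2: by rewrite orbT.
rewrite mem_Dseq; apply/orP; left; apply/or3P/Or33/mapP.
by exists i; rewrite // mem_filter alpha_le mem_enum.
Qed.

Lemma bracket_index_Dseq y : ~~ Nstar A b j -> alpha_chk A b j <= y <= 1 ->
  let p := bracket_index (Dseq A b j) y in
  (0 < p <= l_ A b j)%N && (d A b j p.-1 <= y <= d A b j p).
Proof.
move=> notN y_bounds; have := bracket_index_bounds (x0 := 0) (y := y) Dseq_sorted.
rewrite size_Dseq ltnS l_gt0 //= -/(d A b j 0) -/(d A b j (l_ A b j)).
by rewrite d_first d_last ltnS => /(_ isT y_bounds).
Qed.

Lemma min_entry_gamma (p : 'I_n -> nat) (x : 'I_n -> R) i :
  (0 < p j <= l_ A b j)%N -> d A b j (p j).-1 <= x j <= d A b j (p j) ->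
  Num.min (A i j) (x j) = gamma A b p i j * x j + (1 - gamma A b p i j) * A i j.
Proof.
move=> /andP[p_gt0 p_le_l] x_bracket.
have p_range : (0 < p j < size (Dseq A b j))%N by rewrite size_Dseq ltnS p_gt0.
rewrite (min_bracket (x0 := 0) Dseq_sorted p_range x_bracket (entry_in_Dseq_or_below i)).
rewrite /gamma /d; case: ifP => _.
  by rewrite mul1r subrr mul0r addr0.
by rewrite mul0r add0r subr0 mul1r.
Qed.

End Breakpoints.

Section MaxMinSystem.
Variables (R : realFieldType) (n : nat) (A : 'M[R]_n) (b : 'I_n -> R).

Lemma alpha_chk_le (x : 'I_n -> R) j : 0 <= x j ->
  (forall i, b i <= maxmin A x i) -> alpha_chk A b j <= x j.
Proof.
move=> x_ge0 feasible; apply: (big_ind (fun v => v <= x j)) => // [u v|i _].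
  by rewrite ge_max => -> ->.
rewrite lerBlDr (le_trans (feasible i)) // /maxmin (bigD1 j) //=.
rewrite lerD ?ge_min ?lexx ?orbT //.
by apply: ler_sum => k _; rewrite ge_min lexx.
Qed.

Hypothesis A01 : forall i j, 0 <= A i j <= 1.

Lemma nonzero_of_feasible (x : 'I_n -> R) : (0 < n)%N -> (forall i, 0 < b i) ->
  (forall i, b i <= maxmin A x i) -> exists j, x j != 0.
Proof.
move=> n_gt0 b_gt0 feasible; pose i0 := Ordinal n_gt0.
apply/existsP; apply: contraLR (feasible i0).
rewrite negb_exists -ltNge => /forallP x0; rewrite /maxmin big1 ?b_gt0 // => j _.
by move/negbNE/eqP: (x0 j) => ->; rewrite min_r //; case/andP: (A01 i0 j).
Qed.

Hypothesis alpha_le1 : forall j, alpha_chk A b j <= 1.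

Lemma maxmin_lin_form (p : 'I_n -> nat) (x : 'I_n -> R) : inP A b p ->
  (forall j, Nstar A b j -> x j = 1) ->
  (forall j, ~~ Nstar A b j -> d A b j (p j).-1 <= x j <= d A b j (p j)) ->
  forall i, maxmin A x i = lin_form A b p x i.
Proof.
move=> pP x_Nstar x_bracket i; rewrite /maxmin /lin_form (bigID (Nstar A b)) /=.
congr (_ + _); apply: eq_bigr => j Nj.
  by rewrite x_Nstar // min_l //; case/andP: (A01 i j).
have := pP j; rewrite (negbTE Nj) => p_range.
exact: (min_entry_gamma (fun k => A01 k j) (alpha_le1 j) i p_range (x_bracket j Nj)).
Qed.

Lemma exists_bracketing (x : 'I_n -> R) : (forall j, alpha_chk A b j <= x j <= 1) ->
  exists2 p, inP A b p &
    forall j, ~~ Nstar A b j -> d A b j (p j).-1 <= x j <= d A b j (p j).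
Proof.
move=> x_bounds.
have bracket j (Nj : ~~ Nstar A b j) :=
  bracket_index_Dseq (fun i => A01 i j) (alpha_le1 j) Nj (x_bounds j).
exists (fun j => if Nstar A b j then 0%N else bracket_index (Dseq A b j) (x j)) => j.
  case: ifP => [-> // | /negbT Nj].
  by rewrite (negbTE Nj); case/andP: (bracket j Nj).
by move=> Nj; rewrite (negbTE Nj); case/andP: (bracket j Nj).
Qed.

End MaxMinSystem.

Theorem theorem4p1 (R : realFieldType) (n : nat) (A : 'M[R]_n) (b : 'I_n -> R)
  (lam : R) (x : 'I_n -> R) :
  (0 < n)%N ->
  (forall i j, 0 <= A i j <= 1) ->
  (forall i, 0 < b i) ->
  (forall j, alpha_chk A b j <= 1) ->
  0 <= lam ->
  (forall j, 0 <= x j <= 1) ->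
  (Vstar A b lam x <->
   exists p : 'I_n -> nat, inP A b p /\
     (forall j, Nstar A b j -> x j = d A b j 0 /\ d A b j 0 = 1) /\
     (forall j, ~~ Nstar A b j -> d A b j (p j).-1 <= x j <= d A b j (p j)) /\
     (forall i, b i <= lin_form A b p x i) /\
     (forall i, lin_form A b p x i = lam * x i)).
Proof.
move=> n_gt0 A01 b_gt0 alpha_le1 _ x01; split.
  case=> _ [feasible [eigen _]].
  have x_bounds j : alpha_chk A b j <= x j <= 1.
    by case/andP: (x01 j) => x_ge0 ->; rewrite alpha_chk_le.
  have d0_Nstar j : Nstar A b j -> d A b j 0 = 1.
    by move/eqP; rewrite -(d_first (fun i => A01 i j)).
  have x_Nstar j : Nstar A b j -> x j = 1.
    move=> /eqP Nj; apply/le_anti; rewrite -{2}Nj.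
    by case/andP: (x_bounds j) => -> ->.
  have [p pP x_bracket] := exists_bracketing A01 alpha_le1 x_bounds.
  have lin := maxmin_lin_form A01 alpha_le1 pP x_Nstar x_bracket.
  exists p; split=> //; split=> [j Nj | ]; first by rewrite x_Nstar ?d0_Nstar.
  by split=> //; split=> i; rewrite -lin.
case=> p [pP [x_Nstar [x_bracket [lin_feasible lin_eigen]]]].
have x_Nstar1 j (Nj : Nstar A b j) : x j = 1 by case: (x_Nstar j Nj) => -> ->.
have lin := maxmin_lin_form A01 alpha_le1 pP x_Nstar1 x_bracket.
have feasible i : b i <= maxmin A x i by rewrite lin.
split=> //; split=> //; split=> [i | ]; first by rewrite lin.
exact: (nonzero_of_feasible A01 n_gt0 b_gt0 feasible).
Qed.
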